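(* Let $a<b$ and let $\mathbf{v}:[a,b]\to\mathbb{R}^n$ be continuously differentiable, and suppose $\mathbf{v}(t)=0$ for only finitely many $t\in[a,b]$. Then there exists a continuously differentiable function $\mu:[a,b]\to\mathbb{R}$ such that $|\mu(t)|=\|\mathbf{v}(t)\|_2$ for all $t\in[a,b]$.
   Context: $\|\cdot\|_2$ is the Euclidean norm on $\mathbb{R}^n$. *)

From Stdlib Require Import Reals Lra Lia List.
Open Scope R_scope.

(* Vectors of R^n are represented as x : nat -> R, only components i < n matter. *)
Fixpoint sumsq (n : nat) (x : nat -> R) : R :=
  match n with
  | O => 0
  | S m => sumsq m x + (x m) ^ 2
  end.

Definition norm2 (n : nat) (x : nat -> R) : R := sqrt (sumsq n x).

Definition C1_on (a b : R) (f : R -> R) : Prop :=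
  exists f' : R -> R,
    (forall t, a <= t <= b ->
       limit1_in (fun s => (f s - f t) / (s - t))
                 (fun s => a <= s <= b /\ s <> t) (f' t) t) /\
    (forall t, a <= t <= b ->
       limit1_in f' (fun s => a <= s <= b) (f' t) t).

From Stdlib Require Import Reals Lra Lia List ClassicalEpsilon.
Open Scope R_scope.

(* Let Z be the finite zero set of v in [a,b] (without
   repetitions) and let sg Z t = (-1)^#{z in Z | z < t}, a sign that flips
   just after each zero.  We take mu = sg Z * |v|, so |mu| = |v| trivially.
   Off Z, sg Z is locally constant and |v| is C^1 with derivative
   <v, v'>/|v|.  At a zero t write v s = (s - t) q_t(s), q_t the difference
   quotient vector, which tends to v'(t): the flip of sg Z at t cancels the
   sign of s - t, so mu s = - sg Z t (s - t) |q_t(s)| near t, giving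
   mu'(t) = - sg Z t |v'(t)|, and near t the derivative equals
   - sg Z t <q_t, v'>/|q_t|, which tends to mu'(t) (to 0 via the bound
   |<x,y>| <= |x|_2 |y|_1 when v'(t) = 0). *)

Lemma lim_local_ext (f g : R -> R) (D : R -> Prop) (l x0 : R) :
  (exists d, 0 < d /\ forall x, D x -> Rabs (x - x0) < d -> f x = g x) ->
  limit1_in f D l x0 -> limit1_in g D l x0.
Proof.
  intros [d [Hd Hfg]] Hf eps Heps.
  destruct (Hf eps Heps) as [al [Hal Hclose]].
  exists (Rmin al d); split; [now apply Rmin_pos|].
  intros x [Dx Hx]; simpl in *; unfold Rdist in *.
  pose proof (Rmin_l al d); pose proof (Rmin_r al d).
  rewrite <- Hfg by (auto; lra).
  apply Hclose; split; [assumption|]; simpl; unfold Rdist; lra.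
Qed.

Lemma lim_const (c : R) (D : R -> Prop) (x0 : R) : limit1_in (fun _ => c) D c x0.
Proof. exact (limit_free (fun _ => c) D x0 x0). Qed.

Lemma lim_restrict (f : R -> R) (D D' : R -> Prop) (l x0 : R) :
  (forall x, D' x -> D x) -> limit1_in f D l x0 -> limit1_in f D' l x0.
Proof.
  intros Hsub Hf eps Heps; destruct (Hf eps Heps) as [al [Hal Hclose]].
  exists al; split; [assumption|]; intros x [Dx Hx]; apply Hclose; auto.
Qed.

Lemma lim_punctured (f : R -> R) (D : R -> Prop) (x0 : R) :
  limit1_in f (fun x => D x /\ x <> x0) (f x0) x0 -> limit1_in f D (f x0) x0.
Proof.
  intros Hf eps Heps; destruct (Hf eps Heps) as [al [Hal Hclose]].
  exists al; split; [assumption|]; intros x [Dx Hx].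
  destruct (Req_dec x x0) as [->|Hne].
  - simpl; unfold Rdist; rewrite Rminus_diag, Rabs_R0; lra.
  - apply Hclose; auto.
Qed.

Lemma lim_continuous_comp (g f : R -> R) (D : R -> Prop) (l x0 : R) :
  continuity_pt g l -> limit1_in f D l x0 ->
  limit1_in (fun x => g (f x)) D (g l) x0.
Proof.
  intros Hg Hf eps Heps.
  destruct (Hg eps Heps) as [al [Hal Hgclose]].
  destruct (Hf al Hal) as [be [Hbe Hfclose]].
  exists be; split; [assumption|]; intros x [Dx Hx].
  destruct (Req_dec (f x) l) as [->|Hne].
  - simpl; unfold Rdist; rewrite Rminus_diag, Rabs_R0; lra.
  - apply Hgclose; split; [split; [exact I | auto]|]; apply Hfclose; auto.
Qed.

Lemma lim_sqrt (f : R -> R) (D : R -> Prop) (l x0 : R) :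
  0 <= l -> limit1_in f D l x0 -> limit1_in (fun x => sqrt (f x)) D (sqrt l) x0.
Proof. intros Hl Hf; apply lim_continuous_comp; auto; now apply continuity_pt_sqrt. Qed.

Lemma lim_abs (f : R -> R) (D : R -> Prop) (l x0 : R) :
  limit1_in f D l x0 -> limit1_in (fun x => Rabs (f x)) D (Rabs l) x0.
Proof. intros Hf; apply lim_continuous_comp; auto; apply Rcontinuity_abs. Qed.

Lemma lim_squeeze (f g : R -> R) (D : R -> Prop) (x0 : R) :
  (exists d, 0 < d /\ forall x, D x -> Rabs (x - x0) < d -> Rabs (f x) <= g x) ->
  limit1_in g D 0 x0 -> limit1_in f D 0 x0.
Proof.
  intros [d [Hd Hdom]] Hg eps Heps.
  destruct (Hg eps Heps) as [al [Hal Hclose]].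
  exists (Rmin al d); split; [now apply Rmin_pos|].
  intros x [Dx Hx]; simpl in *; unfold Rdist in *.
  pose proof (Rmin_l al d); pose proof (Rmin_r al d).
  assert (Hgx : Rabs (g x - 0) < eps).
  { apply (Hclose x); split; [assumption|]; simpl; unfold Rdist; lra. }
  specialize (Hdom x Dx ltac:(lra)).
  rewrite Rminus_0_r in *; pose proof (Rle_abs (g x)); lra.
Qed.

Lemma deriv_continuous (f : R -> R) (D : R -> Prop) (l t : R) :
  limit1_in (fun s => (f s - f t) / (s - t)) (fun s => D s /\ s <> t) l t ->
  limit1_in f D (f t) t.
Proof.
  intros Hdiff; apply lim_punctured.
  assert (Hlim : limit1_in (fun s => (f s - f t) / (s - t) * (s - t) + f t)
                   (fun s => D s /\ s <> t) (l * (t - t) + f t) t).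
  { apply limit_plus; [apply limit_mul; [exact Hdiff|]|apply lim_const].
    apply limit_minus; [apply lim_x | apply lim_const]. }
  replace (l * (t - t) + f t) with (f t) in Hlim by ring.
  revert Hlim; apply lim_local_ext; exists 1; split; [lra|].
  intros s [_ Hst] _; field; lra.
Qed.

Fixpoint dot (n : nat) (x y : nat -> R) : R :=
  match n with O => 0 | S m => dot m x y + x m * y m end.

Fixpoint sabs (n : nat) (y : nat -> R) : R :=
  match n with O => 0 | S m => sabs m y + Rabs (y m) end.

(* The signed length of the orthogonal projection of y on the line of x
   (0 when x = 0, since [/ 0 = 0]). *)
Definition proj (n : nat) (x y : nat -> R) : R := dot n x y / norm2 n x.

Lemma sumsq_dot n x : sumsq n x = dot n x x.
Proof. induction n as [|n IH]; simpl; [reflexivity|]; rewrite IH; ring. Qed.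

Lemma sumsq_ge0 n x : 0 <= sumsq n x.
Proof. induction n; simpl; [lra|]; pose proof (pow2_ge_0 (x n)); lra. Qed.

Lemma norm2_sqr n x : norm2 n x * norm2 n x = sumsq n x.
Proof. apply sqrt_sqrt, sumsq_ge0. Qed.

Lemma sabs_ge0 n y : 0 <= sabs n y.
Proof. induction n; simpl; [lra|]; pose proof (Rabs_pos (y n)); lra. Qed.

Lemma norm2_eq0 n x : norm2 n x = 0 <-> forall i, (i < n)%nat -> x i = 0.
Proof.
  unfold norm2; split.
  - intros Hn; apply sqrt_eq_0 in Hn; [|apply sumsq_ge0]; revert Hn.
    induction n as [|n IH]; intros Hs i Hi; [lia|]; simpl in Hs.
    pose proof (sumsq_ge0 n x); pose proof (pow2_ge_0 (x n)).
    destruct (Nat.eq_dec i n) as [->|Hne].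
    + destruct (Req_dec (x n) 0) as [|Hne]; [assumption|].
      pose proof (pow_nonzero (x n) 2 Hne); lra.
    + apply IH; [lra | lia].
  - intros Hz; rewrite <- sqrt_0; f_equal.
    induction n as [|n IH]; simpl; [reflexivity|].
    rewrite IH, Hz by auto; ring.
Qed.

Lemma sabs_eq0 n y : (forall i, (i < n)%nat -> y i = 0) -> sabs n y = 0.
Proof.
  induction n as [|n IH]; intros Hz; simpl; [reflexivity|].
  rewrite IH, Hz, Rabs_R0 by auto; ring.
Qed.

Lemma dot_ext n x y x' y' :
  (forall i, (i < n)%nat -> x i = x' i /\ y i = y' i) -> dot n x y = dot n x' y'.
Proof.
  induction n as [|n IH]; intros Hxy; simpl; [reflexivity|].
  destruct (Hxy n) as [-> ->]; auto; rewrite IH; auto.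
Qed.

Lemma norm2_ext n x x' : (forall i, (i < n)%nat -> x i = x' i) -> norm2 n x = norm2 n x'.
Proof.
  intros Hx; unfold norm2; rewrite !sumsq_dot; f_equal; apply dot_ext; auto.
Qed.

Lemma proj_ext n x y x' y' :
  (forall i, (i < n)%nat -> x i = x' i /\ y i = y' i) -> proj n x y = proj n x' y'.
Proof.
  intros Hxy; unfold proj; rewrite (dot_ext n x y x' y'), (norm2_ext n x x'); auto.
  intros i Hi; apply Hxy; auto.
Qed.

Lemma dot_scale_l n c x y : dot n (fun i => c * x i) y = c * dot n x y.
Proof. induction n as [|n IH]; simpl; [ring|]; rewrite IH; ring. Qed.

Lemma dot_add_l n x x' y :
  dot n (fun i => x i + x' i) y = dot n x y + dot n x' y.
Proof. induction n as [|n IH]; simpl; [ring|]; rewrite IH; ring. Qed.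

Lemma norm2_scale n c x : norm2 n (fun i => c * x i) = Rabs c * norm2 n x.
Proof.
  assert (Hsq : sumsq n (fun i => c * x i) = Rsqr c * sumsq n x).
  { unfold Rsqr; induction n as [|n IH]; simpl; [ring|]; rewrite IH; ring. }
  unfold norm2; rewrite Hsq, sqrt_mult, sqrt_Rsqr_abs;
    [reflexivity | apply Rle_0_sqr | apply sumsq_ge0].
Qed.

Lemma dot_bound n x y : Rabs (dot n x y) <= norm2 n x * sabs n y.
Proof.
  induction n as [|n IH]; simpl; unfold norm2 in *; simpl.
  { rewrite Rabs_R0, sqrt_0; lra. }
  pose proof (sumsq_ge0 n x); pose proof (pow2_ge_0 (x n)).
  pose proof (sabs_ge0 n y); pose proof (Rabs_pos (y n)).
  assert (Hle : sqrt (sumsq n x) <= sqrt (sumsq n x + x n ^ 2))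
    by (apply sqrt_le_1_alt; lra).
  assert (Hcomp : Rabs (x n) <= sqrt (sumsq n x + x n ^ 2)).
  { rewrite <- (sqrt_pow2 (Rabs (x n))) by apply Rabs_pos.
    apply sqrt_le_1_alt; rewrite pow2_abs; lra. }
  eapply Rle_trans; [apply Rabs_triang|]; rewrite Rabs_mult, Rmult_plus_distr_l.
  apply Rplus_le_compat.
  - eapply Rle_trans; [apply IH|]; apply Rmult_le_compat_r; auto.
  - apply Rmult_le_compat_r; auto.
Qed.

Lemma norm2_diff_quotient n x y h :
  h <> 0 -> 0 < norm2 n x + norm2 n y ->
  (norm2 n x - norm2 n y) / h =
  dot n (fun i => x i + y i) (fun i => (x i - y i) / h) / (norm2 n x + norm2 n y).
Proof.
  intros Hh Hpos.
  assert (Hdot : forall m, dot m (fun i => x i + y i) (fun i => (x i - y i) / h)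
                          = (sumsq m x - sumsq m y) / h).
  { induction m as [|m IH]; simpl; [field; auto|]; rewrite IH; field; auto. }
  rewrite Hdot, <- !norm2_sqr; field; lra.
Qed.

Lemma proj_scale n c x y : proj n (fun i => c * x i) y = c / Rabs c * proj n x y.
Proof.
  unfold proj, Rdiv; rewrite dot_scale_l, norm2_scale, Rinv_mult; ring.
Qed.

Lemma proj_self n x : proj n x x = norm2 n x.
Proof.
  unfold proj; rewrite <- sumsq_dot, <- norm2_sqr.
  destruct (Req_dec (norm2 n x) 0) as [->|Hne]; [unfold Rdiv; ring | field; auto].
Qed.

Lemma proj_bound n x y : Rabs (proj n x y) <= sabs n y.
Proof.
  pose proof (sabs_ge0 n y); unfold proj.
  destruct (Req_dec (norm2 n x) 0) as [->|Hne].
  { unfold Rdiv; rewrite Rinv_0, Rmult_0_r, Rabs_R0; assumption. }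
  assert (Hpos : 0 < norm2 n x) by (pose proof (sqrt_pos (sumsq n x)); unfold norm2 in *; lra).
  unfold Rdiv; rewrite Rabs_mult, Rabs_inv, (Rabs_pos_eq (norm2 n x)) by lra.
  apply Rmult_le_reg_r with (norm2 n x); [assumption|].
  rewrite Rmult_assoc, Rinv_l, Rmult_1_r by lra.
  rewrite Rmult_comm; apply dot_bound.
Qed.

Lemma lim_dot n (D : R -> Prop) x0 (F G : R -> nat -> R) (L M : nat -> R) :
  (forall i, (i < n)%nat -> limit1_in (fun s => F s i) D (L i) x0) ->
  (forall i, (i < n)%nat -> limit1_in (fun s => G s i) D (M i) x0) ->
  limit1_in (fun s => dot n (F s) (G s)) D (dot n L M) x0.
Proof.
  induction n as [|m IH]; intros HF HG; simpl; [apply lim_const|].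
  apply limit_plus; [apply IH | apply limit_mul]; auto.
Qed.

Lemma lim_sabs n (D : R -> Prop) x0 (F : R -> nat -> R) (L : nat -> R) :
  (forall i, (i < n)%nat -> limit1_in (fun s => F s i) D (L i) x0) ->
  limit1_in (fun s => sabs n (F s)) D (sabs n L) x0.
Proof.
  induction n as [|m IH]; intros HF; simpl; [apply lim_const|].
  apply limit_plus; [apply IH | apply lim_abs]; auto.
Qed.

Lemma lim_norm2 n (D : R -> Prop) x0 (F : R -> nat -> R) (L : nat -> R) :
  (forall i, (i < n)%nat -> limit1_in (fun s => F s i) D (L i) x0) ->
  limit1_in (fun s => norm2 n (F s)) D (norm2 n L) x0.
Proof.
  intros HF; unfold norm2; apply lim_sqrt; [apply sumsq_ge0|].
  rewrite sumsq_dot; apply lim_local_ext with (fun s => dot n (F s) (F s)).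
  - exists 1; split; [lra|]; intros; symmetry; apply sumsq_dot.
  - apply lim_dot; assumption.
Qed.

Lemma lim_proj n (D : R -> Prop) x0 (F G : R -> nat -> R) (L M : nat -> R) :
  (forall i, (i < n)%nat -> limit1_in (fun s => F s i) D (L i) x0) ->
  (forall i, (i < n)%nat -> limit1_in (fun s => G s i) D (M i) x0) ->
  norm2 n L <> 0 ->
  limit1_in (fun s => proj n (F s) (G s)) D (proj n L M) x0.
Proof.
  intros HF HG HL; unfold proj, Rdiv; apply limit_mul.
  - apply lim_dot; assumption.
  - apply (limit_inv (fun s => norm2 n (F s))); [apply lim_norm2|]; assumption.
Qed.
Fixpoint sg (L : list R) (t : R) : R :=
  match L with
  | nil => 1
  | z :: L' => (if Rlt_dec z t then -1 else 1) * sg L' t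
  end.

Lemma sg_abs L t : Rabs (sg L t) = 1.
Proof.
  induction L as [|z L IH]; simpl; [apply Rabs_R1|].
  rewrite Rabs_mult, IH; destruct (Rlt_dec z t).
  - rewrite Rabs_left by lra; ring.
  - rewrite Rabs_R1; ring.
Qed.

Lemma sg_near L t : NoDup L ->
  exists d, 0 < d /\ forall s, s <> t -> Rabs (s - t) < d ->
    ~ In s L /\ (s < t -> sg L s = sg L t) /\
    (t < s -> ~ In t L -> sg L s = sg L t) /\ (t < s -> In t L -> sg L s = - sg L t).
Proof.
  induction L as [|z L IH]; intros Hnd.
  { exists 1; split; [lra|]; intros; simpl; intuition. }
  inversion Hnd as [|? ? Hz HndL]; subst.
  destruct (IH HndL) as [d [Hd Hnear]].
  destruct (Req_dec z t) as [<-|Hzt].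
  - exists d; split; [assumption|]; intros s Hs Hsd.
    destruct (Hnear s Hs Hsd) as [HsL [Hleft [Hoff _]]]; simpl.
    destruct (Rlt_dec z z) as [Hzz|_]; [lra|].
    split; [intros [Hsz|HsL']; [congruence | contradiction]|].
    split; [|split].
    + intros Hsz; destruct (Rlt_dec z s); [lra|]; rewrite Hleft; auto.
    + intros _ Hn; exfalso; apply Hn; left; reflexivity.
    + intros Hzs _; destruct (Rlt_dec z s); [|lra]; rewrite Hoff; auto; ring.
  - assert (Hgap : 0 < Rabs (z - t)) by (apply Rabs_pos_lt; lra).
    exists (Rmin d (Rabs (z - t))); split; [now apply Rmin_pos|].
    intros s Hs Hsd; pose proof (Rmin_l d (Rabs (z - t))); pose proof (Rmin_r d (Rabs (z - t))).
    destruct (Hnear s Hs ltac:(lra)) as [HsL [Hleft [Hoff Hon]]]; simpl.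
    assert (Hside : (if Rlt_dec z s then -1 else 1) = (if Rlt_dec z t then -1 else 1)).
    { assert (Hclose : Rabs (s - t) < Rabs (z - t)) by lra.
      apply Rabs_def2 in Hclose.
      destruct (Rcase_abs (z - t)) as [Hneg|Hnn];
        [rewrite Rabs_left in Hclose by lra | rewrite Rabs_right in Hclose by lra];
        destruct (Rlt_dec z s), (Rlt_dec z t); lra. }
    rewrite Hside.
    split; [intros [<-|HsL']; [lra | contradiction]|].
    split; [|split].
    + intros Hst; rewrite Hleft; auto.
    + intros Hts Hn; rewrite Hoff; auto; intro Ht; apply Hn; right; assumption.
    + intros Hts [Hzt'|Ht]; [congruence|]; rewrite Hon; auto; ring.
Qed.

Lemma finite_set_enum (P : R -> Prop) (l : list R) :
  (forall t, P t -> In t l) -> exists L, NoDup L /\ forall t, In t L <-> P t.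
Proof.
  intros Hcover.
  set (inP := fun t => if excluded_middle_informative (P t) then true else false).
  exists (nodup Req_EM_T (filter inP l)); split; [apply NoDup_nodup|].
  intros t; rewrite nodup_In, filter_In; unfold inP.
  destruct (excluded_middle_informative (P t)) as [Ht|Ht]; split.
  - tauto.
  - intros; split; auto.
  - intros [_ F]; discriminate.
  - tauto.
Qed.

Lemma C1_derivatives a b n (v : R -> nat -> R) :
  (forall i, (i < n)%nat -> C1_on a b (fun t => v t i)) ->
  exists dv : nat -> R -> R, forall i, (i < n)%nat ->
    (forall t, a <= t <= b ->
       limit1_in (fun s => (v s i - v t i) / (s - t))
                 (fun s => a <= s <= b /\ s <> t) (dv i t) t) /\
    (forall t, a <= t <= b -> limit1_in (dv i) (fun s => a <= s <= b) (dv i t) t).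
Proof.
  intros HC1.
  apply (choice (fun i f => (i < n)%nat ->
    (forall t, a <= t <= b ->
       limit1_in (fun s => (v s i - v t i) / (s - t))
                 (fun s => a <= s <= b /\ s <> t) (f t) t) /\
    (forall t, a <= t <= b -> limit1_in f (fun s => a <= s <= b) (f t) t))).
  intros i; destruct (Nat.lt_ge_cases i n) as [Hi|Hi].
  - destruct (HC1 i Hi) as [f Hf]; exists f; auto.
  - exists (fun _ => 0); intros; lia.
Qed.

Section SignedNorm.
Variables (a b : R) (n : nat) (v : R -> nat -> R) (dv : nat -> R -> R) (Z : list R).

Hypothesis v_diff : forall i t, (i < n)%nat -> a <= t <= b ->
  limit1_in (fun s => (v s i - v t i) / (s - t)) (fun s => a <= s <= b /\ s <> t) (dv i t) t.
Hypothesis dv_cont : forall i t, (i < n)%nat -> a <= t <= b ->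
  limit1_in (dv i) (fun s => a <= s <= b) (dv i t) t.
Hypothesis Z_zeros : forall t, In t Z <-> a <= t <= b /\ forall i, (i < n)%nat -> v t i = 0.
Hypothesis Z_nodup : NoDup Z.

Definition dquot (t s : R) (i : nat) : R := (v s i - v t i) / (s - t).

Definition mu (t : R) : R := sg Z t * norm2 n (v t).

Definition mu' (t : R) : R :=
  if in_dec Req_EM_T t Z then - sg Z t * norm2 n (fun i => dv i t)
  else sg Z t * proj n (v t) (fun i => dv i t).

Lemma v_cont i t : (i < n)%nat -> a <= t <= b ->
  limit1_in (fun s => v s i) (fun s => a <= s <= b /\ s <> t) (v t i) t.
Proof.
  intros Hi Ht; apply lim_restrict with (fun s => a <= s <= b); [tauto|].
  apply (deriv_continuous (fun s => v s i) _ (dv i t)), v_diff; assumption.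
Qed.

Lemma norm_pos_off_zeros t : a <= t <= b -> ~ In t Z -> 0 < norm2 n (v t).
Proof.
  intros Ht Hout; pose proof (sqrt_pos (sumsq n (v t))); fold (norm2 n (v t)) in *.
  destruct (Req_dec (norm2 n (v t)) 0) as [H0|]; [|lra].
  exfalso; apply Hout, Z_zeros; split; [|apply norm2_eq0]; assumption.
Qed.

(* Away from Z, sg Z is locally constant. *)
Lemma mu_near_regular t : ~ In t Z ->
  exists d, 0 < d /\ forall s, s <> t -> Rabs (s - t) < d ->
    mu s = sg Z t * norm2 n (v s) /\ mu' s = sg Z t * proj n (v s) (fun i => dv i s).
Proof.
  intros Hout; destruct (sg_near Z t Z_nodup) as [d [Hd Hnear]].
  exists d; split; [assumption|]; intros s Hs Hsd.
  destruct (Hnear s Hs Hsd) as [HsZ [Hleft [Hright _]]].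
  assert (Hsg : sg Z s = sg Z t).
  { destruct (Rtotal_order s t) as [Hst|[Heq|Hts]]; [auto | contradiction | auto]. }
  unfold mu, mu'; rewrite Hsg; destruct (in_dec Req_EM_T s Z); [contradiction | auto].
Qed.

(* Near a zero t, v s = (s - t) q_t(s) and the sign flip of sg Z at t
   compensates the sign of s - t. *)
Lemma mu_near_zero t : In t Z ->
  exists d, 0 < d /\ forall s, s <> t -> Rabs (s - t) < d ->
    mu s = - sg Z t * (s - t) * norm2 n (dquot t s) /\
    mu' s = - sg Z t * proj n (dquot t s) (fun i => dv i s).
Proof.
  intros Hin; destruct (sg_near Z t Z_nodup) as [d [Hd Hnear]].
  exists d; split; [assumption|]; intros s Hs Hsd.
  destruct (Hnear s Hs Hsd) as [HsZ [Hleft [_ Hflip]]].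
  assert (Hfactor : forall i, (i < n)%nat -> v s i = (s - t) * dquot t s i).
  { intros i Hi; unfold dquot; rewrite (proj2 (proj1 (Z_zeros t) Hin) i Hi); field; lra. }
  unfold mu, mu'; destruct (in_dec Req_EM_T s Z) as [|_]; [contradiction|].
  rewrite (norm2_ext n (v s) (fun i => (s - t) * dquot t s i)), norm2_scale by assumption.
  rewrite (proj_ext n (v s) _ (fun i => (s - t) * dquot t s i) (fun i => dv i s)), proj_scale
    by (intros; split; auto).
  destruct (Rtotal_order s t) as [Hst|[Heq|Hts]]; [|contradiction|].
  - rewrite Hleft, Rabs_left by lra; split; [ring | field; lra].
  - rewrite Hflip, Rabs_right by (auto; lra); split; [ring | field; lra].
Qed.

(* At a zero t, the difference quotient of mu is - sg Z t |q_t(s)|. *)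
Lemma mu_deriv_zero t : a <= t <= b -> In t Z ->
  limit1_in (fun s => (mu s - mu t) / (s - t)) (fun s => a <= s <= b /\ s <> t) (mu' t) t.
Proof.
  intros Ht Hin.
  assert (Hmu0 : mu t = 0).
  { unfold mu; rewrite (proj2 (norm2_eq0 n (v t))) by (apply Z_zeros; assumption); ring. }
  assert (Hmu' : mu' t = - sg Z t * norm2 n (fun i => dv i t)).
  { unfold mu'; destruct (in_dec Req_EM_T t Z); [reflexivity | contradiction]. }
  rewrite Hmu'; apply lim_local_ext with (fun s => - sg Z t * norm2 n (dquot t s)).
  - destruct (mu_near_zero t Hin) as [d [Hd Hnear]]; exists d; split; [assumption|].
    intros s [_ Hs] Hsd; rewrite (proj1 (Hnear s Hs Hsd)), Hmu0; field; lra.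
  - apply limit_mul; [apply lim_const|].
    apply (lim_norm2 n _ t (dquot t)); intros i Hi; apply v_diff; assumption.
Qed.

(* Off Z, mu = sg Z t |v| near t and |v| is differentiable since |v t| > 0. *)
Lemma mu_deriv_regular t : a <= t <= b -> ~ In t Z ->
  limit1_in (fun s => (mu s - mu t) / (s - t)) (fun s => a <= s <= b /\ s <> t) (mu' t) t.
Proof.
  intros Ht Hout; pose proof (norm_pos_off_zeros t Ht Hout) as Hpos.
  assert (Hmu' : mu' t = sg Z t * (dot n (fun i => v t i + v t i) (fun i => dv i t)
                                    * / (norm2 n (v t) + norm2 n (v t)))).
  { unfold mu', proj; destruct (in_dec Req_EM_T t Z); [contradiction|].
    rewrite dot_add_l; field; lra. }
  rewrite Hmu'; apply lim_local_ext with (fun s => sg Z t *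
    (dot n (fun i => v s i + v t i) (dquot t s) * / (norm2 n (v s) + norm2 n (v t)))).
  - destruct (mu_near_regular t Hout) as [d [Hd Hnear]]; exists d; split; [assumption|].
    intros s [_ Hs] Hsd; rewrite (proj1 (Hnear s Hs Hsd)).
    pose proof (sqrt_pos (sumsq n (v s))); fold (norm2 n (v s)) in *.
    unfold mu; rewrite <- Rmult_minus_distr_l; unfold Rdiv at 1; rewrite Rmult_assoc.
    fold ((norm2 n (v s) - norm2 n (v t)) / (s - t)).
    rewrite norm2_diff_quotient by lra; reflexivity.
  - apply limit_mul; [apply lim_const | apply limit_mul].
    + apply (lim_dot n _ t (fun s i => v s i + v t i) (dquot t)); intros i Hi.
      * apply (limit_plus (fun s => v s i) (fun _ => v t i)); [apply v_cont | apply lim_const]; assumption.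
      * apply v_diff; assumption.
    + apply (limit_inv (fun s => norm2 n (v s) + norm2 n (v t))); [|lra].
      apply (limit_plus (fun s => norm2 n (v s)) (fun _ => norm2 n (v t))); [|apply lim_const].
      apply lim_norm2; intros i Hi; apply v_cont; assumption.
Qed.

Lemma mu_deriv t : a <= t <= b ->
  limit1_in (fun s => (mu s - mu t) / (s - t)) (fun s => a <= s <= b /\ s <> t) (mu' t) t.
Proof.
  intros Ht; destruct (in_dec Req_EM_T t Z) as [Hin|Hout];
    [apply mu_deriv_zero | apply mu_deriv_regular]; assumption.
Qed.

Lemma dv_cont_punctured i t : (i < n)%nat -> a <= t <= b ->
  limit1_in (dv i) (fun s => a <= s <= b /\ s <> t) (dv i t) t.
Proof. intros Hi Ht; apply lim_restrict with (fun s => a <= s <= b); [tauto | auto]. Qed.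

(* Off Z, mu' = sg Z t proj(v, v') near t, continuous as |v t| > 0. *)
Lemma mu'_cont_regular t : a <= t <= b -> ~ In t Z ->
  limit1_in mu' (fun s => a <= s <= b) (mu' t) t.
Proof.
  intros Ht Hout; pose proof (norm_pos_off_zeros t Ht Hout) as Hpos.
  apply lim_punctured.
  assert (Hmu' : mu' t = sg Z t * proj n (v t) (fun i => dv i t)).
  { unfold mu'; destruct (in_dec Req_EM_T t Z); [contradiction | reflexivity]. }
  rewrite Hmu'; apply lim_local_ext with (fun s => sg Z t * proj n (v s) (fun i => dv i s)).
  - destruct (mu_near_regular t Hout) as [d [Hd Hnear]]; exists d; split; [assumption|].
    intros s [_ Hs] Hsd; symmetry; apply (Hnear s Hs Hsd).
  - apply limit_mul; [apply lim_const|].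
    apply (lim_proj n _ t v (fun s i => dv i s)); [| |lra]; intros i Hi;
      [apply v_cont | apply dv_cont_punctured]; assumption.
Qed.

(* At a zero t, mu' = - sg Z t proj(q_t, v') near t.  If v'(t) <> 0 this tends
   to - sg Z t |v'(t)|; if v'(t) = 0 it is dominated by |v'|_1, which tends to 0. *)
Lemma mu'_cont_zero t : a <= t <= b -> In t Z ->
  limit1_in mu' (fun s => a <= s <= b) (mu' t) t.
Proof.
  intros Ht Hin; apply lim_punctured.
  destruct (mu_near_zero t Hin) as [d [Hd Hnear]].
  assert (Hmu' : mu' t = - sg Z t * norm2 n (fun i => dv i t)).
  { unfold mu'; destruct (in_dec Req_EM_T t Z); [reflexivity | contradiction]. }
  rewrite Hmu'; destruct (Req_dec (norm2 n (fun i => dv i t)) 0) as [Hdv0|Hdv].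
  - rewrite Hdv0, Rmult_0_r.
    apply lim_squeeze with (fun s => sabs n (fun i => dv i s)).
    + exists d; split; [assumption|]; intros s [_ Hs] Hsd.
      rewrite (proj2 (Hnear s Hs Hsd)), Rabs_mult, Rabs_Ropp, sg_abs, Rmult_1_l.
      apply proj_bound.
    + rewrite <- (sabs_eq0 n (fun i => dv i t)) by (apply norm2_eq0; assumption).
      apply (lim_sabs n _ t (fun s i => dv i s)); intros i Hi; apply dv_cont_punctured; assumption.
  - rewrite <- proj_self.
    apply lim_local_ext with (fun s => - sg Z t * proj n (dquot t s) (fun i => dv i s)).
    + exists d; split; [assumption|]; intros s [_ Hs] Hsd; symmetry; apply (Hnear s Hs Hsd).
    + apply limit_mul; [apply lim_const|].
      apply (lim_proj n _ t (dquot t) (fun s i => dv i s)); [| |assumption]; intros i Hi;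
        [apply v_diff | apply dv_cont_punctured]; assumption.
Qed.

Lemma mu'_cont t : a <= t <= b -> limit1_in mu' (fun s => a <= s <= b) (mu' t) t.
Proof.
  intros Ht; destruct (in_dec Req_EM_T t Z) as [Hin|Hout];
    [apply mu'_cont_zero | apply mu'_cont_regular]; assumption.
Qed.

Lemma mu_abs t : Rabs (mu t) = norm2 n (v t).
Proof.
  unfold mu, norm2; rewrite Rabs_mult, sg_abs, Rabs_pos_eq by apply sqrt_pos; ring.
Qed.
End SignedNorm.

Theorem mainTheorem3 (a b : R) (n : nat) (v : R -> nat -> R) :
  a < b ->
  (forall i : nat, (i < n)%nat -> C1_on a b (fun t => v t i)) ->
  (exists l : list R, forall t : R, a <= t <= b ->
       (forall i : nat, (i < n)%nat -> v t i = 0) -> In t l) ->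
  exists mu : R -> R,
    C1_on a b mu /\
    (forall t : R, a <= t <= b -> Rabs (mu t) = norm2 n (v t)).
Proof.
  intros _ HC1 [l Hl].
  destruct (C1_derivatives a b n v HC1) as [dv Hdv].
  destruct (finite_set_enum (fun t => a <= t <= b /\ forall i, (i < n)%nat -> v t i = 0) l)
    as [Z [HZnd HZ]]; [intros t [Ht Hz]; apply Hl; assumption|].
  exists (mu n v Z); split.
  - exists (mu' n v dv Z); split; intros t Ht.
    + apply (mu_deriv a b); try assumption; intros i s Hi Hs; apply Hdv; assumption.
    + apply (mu'_cont a b); try assumption; intros i s Hi Hs; apply Hdv; assumption.
  - intros t _; apply mu_abs.
Qed.
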